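(* Let $k\ge 3$ be odd and $r\ge 2$ an integer. Let $G$ be the graph with vertex set $\{u,v_1,\dots,v_{k-1},s_1,\dots,s_{r-1},w_1,\dots,w_{r-1}\}$ and edge set $\{v_{i-1}v_i\mid 1\le i\le k\}\cup\{s_{i-1}s_i\mid 1\le i\le r-1\}\cup\{w_{i-1}w_i\mid 1\le i\le r-1\}$, where $v_0=v_k=s_0=w_0=u$ (i.e. a cycle $C_k$ with two paths on $r$ vertices each attached by an endpoint to the same cycle vertex $u$). Then $G$ is not odd-periodic, i.e. the Grover walk on $G$ is either not periodic or has even period.
   Context: For a simple connected finite graph $G=(V,E)$, let $\mathcal{A}=\{(u,v),(v,u)\mid uv\in E\}$ be the set of arcs; for an arc $e=(u,v)$ write $o(e)=u$, $t(e)=v$, $\bar e=(v,u)$. The Grover walk has time evolution $U$ on $\mathbb{C}^{\mathcal{A}}$ with $U_{e,f}=2/\deg t(f)$ if $t(f)=o(e)$, $e\neq\bar f$; $U_{e,f}=2/\deg t(f)-1$ if $e=\bar f$; $0$ otherwise. $G$ is periodic if $U^m=I$ for some positive integer $m$; the least such $m$ is the period; $G$ is odd-periodic if it is periodic with odd period. *)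

From HB Require Import structures.
From mathcomp Require Import all_boot all_order all_algebra.
Set Implicit Arguments. Unset Strict Implicit. Unset Printing Implicit Defensive.
Import Order.TTheory GRing.Theory Num.Theory.
Local Open Scope ring_scope.

(* A simple graph is given by a symmetric irreflexive relation adj on a finType. *)

Section Grover.
Variables (T : finType) (adj : rel T).

Definition arc := {e : T * T | adj e.1 e.2}.

Definition org (e : arc) : T := (val e).1.
Definition term (e : arc) : T := (val e).2.

Definition deg (x : T) : nat := #|[set y | adj x y]|.

Definition grover_entry (e f : arc) : rat :=
  if term f == org e then
    if (val e == ((val f).2, (val f).1)) then 2 / (deg (term f))%:R - 1
    else 2 / (deg (term f))%:R
  else 0.

Definition grover_U : 'M[rat]_#|{: arc}| :=
  \matrix_(i, j) grover_entry (enum_val i) (enum_val j).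

Definition is_period (m : nat) : Prop :=
  (0 < m)%N /\ grover_U ^+ m = 1%:M /\
  (forall m' : nat, (0 < m')%N -> (m' < m)%N -> grover_U ^+ m' <> 1%:M).

Definition periodic : Prop := exists m : nat, (0 < m)%N /\ grover_U ^+ m = 1%:M.

Definition odd_periodic : Prop := exists m : nat, is_period m /\ odd m.

End Grover.

(* Vertices are 'I_(k + 2*(r-1)) with the labelling
     u = 0, v_i = i (1 <= i <= k-1), s_i = k-1+i, w_i = k-1+(r-1)+i (1 <= i <= r-1),
   and v_0 = v_k = s_0 = w_0 = u. *)

Definition vpos (k i : nat) : nat := if (i == 0)%N || (i == k)%N then 0%N else i.
Definition spos (k i : nat) : nat := if i == 0%N then 0%N else (k - 1 + i)%N.
Definition wpos (k r i : nat) : nat := if i == 0%N then 0%N else (k - 1 + (r - 1) + i)%N.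

Definition nat_edge (p q a b : nat) : bool :=
  ((p == a) && (q == b)) || ((p == b) && (q == a)).

Definition cycle_paths_adj (k r : nat) : rel 'I_(k + 2 * (r - 1)) :=
  fun p q =>
    [|| [exists i : 'I_(k.+1), (0 < i)%N && nat_edge p q (vpos k i.-1) (vpos k i)],
        [exists i : 'I_r, (0 < i)%N && nat_edge p q (spos k i.-1) (spos k i)]
      | [exists i : 'I_r, (0 < i)%N && nat_edge p q (wpos k r i.-1) (wpos k r i)]].
Arguments cycle_paths_adj k r : clear implicits.

From Pilot Require Import Defs.
From mathcomp Require Import all_boot all_order all_algebra.
From mathcomp Require Import zify.
Import GRing.Theory Num.Theory.
Set Implicit Arguments. Unset Strict Implicit. Unset Printing Implicit Defensive.

(* The vector x = e(s_n -> s_(n-1)) - e(w_n -> w_(n-1)), antisymmetric on two pendant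
   paths s, w of equal length n hanging from a common vertex u, is carried one arc per
   step towards u, sent back out with a sign change (the uniform part 2/deg u of the
   two scatterings cancels), carried back out and reflected at the leaves.  Hence
   U^(2n) x = -x, and U^m = 1 with m odd would force x = -x. *)

Local Open Scope ring_scope.

Lemma opp_eigenvector_period_even (R : numDomainType) (n N m : nat)
    (A : 'M[R]_n) (x : 'cV[R]_n) :
  x != 0 -> A ^+ N *m x = - x -> A ^+ m = 1%:M -> ~~ odd m.
Proof.
move=> x_neq0 ANx Am1; apply/negP => m_odd.
have powAx j : (A ^+ N) ^+ j *m x = (-1) ^+ j *: x.
  elim: j => [|j IHj]; first by rewrite expr0 mul1mx scale1r.
  by rewrite exprS -mulmxE -mulmxA IHj -scalemxAr ANx exprS mulN1r scaleNr scalerN.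
have := powAx m.
rewrite -exprM mulnC exprM Am1 -[1%:M]/(1 : 'M_n) expr1n mul1mx.
rewrite -signr_odd m_odd scaleN1r.
move/matrixP => xNx; case/eqP: x_neq0; apply/matrixP => i j.
by rewrite mxE; apply/eqP; rewrite -eqNr {2}xNx mxE.
Qed.

Section GroverArcs.
Variables (T : finType) (adj : rel T).

Local Notation U := (grover_U adj).

Definition arc_vec (p q : T) : 'cV[rat]_#|{: Defs.arc adj}| :=
  \col_i (val (enum_val i) == (p, q))%:R.

Lemma grover_arc_vecE (p q : T) (pq : adj p q) i :
  (U *m arc_vec p q) i 0 =
  if (val (enum_val i)).1 == q then 2 / (deg adj q)%:R - (val (enum_val i) == (q, p))%:R
  else 0.
Proof.
pose e : Defs.arc adj := exist _ (p, q) pq.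
rewrite !mxE (bigD1 (enum_rank e)) //= big1 ?addr0 => [|j j_neq].
  rewrite !mxE enum_rankK eqxx mulr1 /grover_entry /term /org /= eq_sym.
  by case: ifP => // _; case: ifP; rewrite ?subr0.
rewrite !mxE; case: eqP => [ej|]; last by rewrite mulr0.
by case/eqP: j_neq; rewrite -[j]enum_valK; congr enum_rank; apply: val_inj.
Qed.

Lemma grover_arc_vec_transmit (p q t : T) (pq : adj p q) :
  p != t -> (forall y, adj q y = (y == p) || (y == t)) ->
  U *m arc_vec p q = arc_vec q t.
Proof.
move=> p_neq_t adj_q.
have deg_q : deg adj q = 2%N.
  by rewrite /deg (_ : [set y | adj q y] = [set p; t]) ?cards2 ?p_neq_t //;
    apply/setP => y; rewrite !inE adj_q.
apply/matrixP => i j; rewrite ord1 grover_arc_vecE // mxE deg_q.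
case: (enum_val i) => [[a b] /= ab]; case: eqP ab => [-> | a_neq_q _]; last first.
  by rewrite xpair_eqE; case: eqP.
rewrite adj_q !xpair_eqE !eqxx /= => /orP[] /eqP ->.
  by rewrite eqxx (negbTE p_neq_t) divff // subrr.
by rewrite eqxx eq_sym (negbTE p_neq_t) divff // subr0.
Qed.

Lemma grover_arc_vec_reflect (p q : T) (pq : adj p q) :
  (forall y, adj q y = (y == p)) -> U *m arc_vec p q = arc_vec q p.
Proof.
move=> adj_q.
have deg_q : deg adj q = 1%N.
  by rewrite /deg (_ : [set y | adj q y] = [set p]) ?cards1 //;
    apply/setP => y; rewrite !inE adj_q.
apply/matrixP => i j; rewrite ord1 grover_arc_vecE // mxE deg_q.
case: (enum_val i) => [[a b] /= ab]; case: eqP ab => [-> | a_neq_q _]; last first.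
  by rewrite xpair_eqE; case: eqP.
by rewrite adj_q => /eqP ->; rewrite eqxx.
Qed.

Lemma grover_arc_vecB_same_head (p p' q : T) (pq : adj p q) (p'q : adj p' q) :
  U *m (arc_vec p q - arc_vec p' q) = - (arc_vec q p - arc_vec q p').
Proof.
apply/matrixP => i j; rewrite ord1 mulmxBr [LHS]mxE [X in _ + X]mxE.
rewrite !grover_arc_vecE // !mxE.
case: (enum_val i) => [[a b] /= _]; case: eqP => [-> | a_neq_q].
  by rewrite !opprB addrC subrKA.
by rewrite !xpair_eqE; case: eqP => //= _; rewrite !subrr oppr0.
Qed.

Lemma grover_not_odd_periodic (x : 'cV[rat]_#|{: Defs.arc adj}|) (N : nat) :
  x != 0 -> U ^+ N *m x = - x -> ~ odd_periodic adj.
Proof.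
move=> x_neq0 UNx [m [[_ [Um _]] m_odd]].
by move: (opp_eigenvector_period_even x_neq0 UNx Um); rewrite m_odd.
Qed.

End GroverArcs.

Section PendantPath.
Variables (T : finType) (adj : rel T) (n : nat) (s : nat -> T).
Hypothesis adj_sym : symmetric adj.
Hypothesis s_inj : {in [pred i | (i <= n)%N] &, injective s}.
Hypothesis adj_s : forall i y, (0 < i <= n)%N ->
  adj (s i) y = (y == s i.-1) || (i < n)%N && (y == s i.+1).

Local Notation U := (grover_U adj).

Lemma pendant_adj_pred i : (0 < i <= n)%N -> adj (s i.-1) (s i).
Proof. by move=> i_range; rewrite adj_sym adj_s // eqxx. Qed.

Lemma pendant_neq i j : (i <= n)%N -> (j <= n)%N -> i <> j -> s i != s j.
Proof. by move=> i_le j_le; apply: contra_not_neq => /s_inj; apply. Qed.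

Lemma grover_pendant_forward i : (0 < i < n)%N ->
  U *m arc_vec adj (s i.-1) (s i) = arc_vec adj (s i) (s i.+1).
Proof.
move=> /andP[i_gt0 i_lt_n]; apply: grover_arc_vec_transmit.
- by apply: pendant_adj_pred; lia.
- by apply: pendant_neq; lia.
- by move=> y; rewrite adj_s ?i_gt0 ?(ltnW i_lt_n) ?i_lt_n.
Qed.

Lemma grover_pendant_end : (0 < n)%N ->
  U *m arc_vec adj (s n.-1) (s n) = arc_vec adj (s n) (s n.-1).
Proof.
move=> n_gt0; apply: grover_arc_vec_reflect; first by apply: pendant_adj_pred; lia.
by move=> y; rewrite adj_s ?n_gt0 ?leqnn // ltnn orbF.
Qed.

Lemma grover_pendant_backward i : (1 < i <= n)%N ->
  U *m arc_vec adj (s i) (s i.-1) = arc_vec adj (s i.-1) (s i.-2).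
Proof.
move=> i_range; have succ_pred : i.-1.+1 = i by lia.
have i_le_n : (i <= n)%N by lia.
apply: grover_arc_vec_transmit.
- by rewrite adj_s ?eqxx //; lia.
- by apply: pendant_neq; lia.
- move=> y; rewrite adj_s; last by lia.
  by rewrite succ_pred i_le_n orbC.
Qed.

End PendantPath.

Section TwinPendantPaths.
Variables (T : finType) (adj : rel T) (n : nat) (s w : nat -> T).
Hypothesis adj_sym : symmetric adj.
Hypothesis n_gt0 : (0 < n)%N.
Hypothesis s0_w0 : s 0 = w 0.
Hypothesis sn_neq_wn : s n != w n.
Hypothesis s_inj : {in [pred i | (i <= n)%N] &, injective s}.
Hypothesis w_inj : {in [pred i | (i <= n)%N] &, injective w}.
Hypothesis adj_s : forall i y, (0 < i <= n)%N ->
  adj (s i) y = (y == s i.-1) || (i < n)%N && (y == s i.+1).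
Hypothesis adj_w : forall i y, (0 < i <= n)%N ->
  adj (w i) y = (y == w i.-1) || (i < n)%N && (y == w i.+1).

Local Notation U := (grover_U adj).

Definition outward_vec i := arc_vec adj (s i.-1) (s i) - arc_vec adj (w i.-1) (w i).
Definition inward_vec i := arc_vec adj (s i) (s i.-1) - arc_vec adj (w i) (w i.-1).

Lemma grover_outward_vec_step i : (0 < i < n)%N -> U *m outward_vec i = outward_vec i.+1.
Proof.
move=> i_range; rewrite mulmxBr (grover_pendant_forward adj_sym s_inj adj_s) //.
by rewrite (grover_pendant_forward adj_sym w_inj adj_w).
Qed.

Lemma grover_inward_vec_step i : (1 < i <= n)%N -> U *m inward_vec i = inward_vec i.-1.
Proof.
move=> i_range; rewrite mulmxBr (grover_pendant_backward s_inj adj_s) //.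
by rewrite (grover_pendant_backward w_inj adj_w).
Qed.

Lemma grover_outward_vec_iter j i : (0 < i)%N -> (i + j <= n)%N ->
  U ^+ j *m outward_vec i = outward_vec (i + j).
Proof.
elim: j i => [|j IHj] i i_gt0 ij_le; first by rewrite expr0 mul1mx addn0.
rewrite exprSr -mulmxE -mulmxA grover_outward_vec_step; last lia.
by rewrite IHj ?addnS //; lia.
Qed.

Lemma grover_inward_vec_iter j i : (j < i <= n)%N ->
  U ^+ j *m inward_vec i = inward_vec (i - j).
Proof.
elim: j i => [|j IHj] i ij_range; first by rewrite expr0 mul1mx subn0.
rewrite exprSr -mulmxE -mulmxA grover_inward_vec_step; last lia.
rewrite IHj; last lia.
by congr inward_vec; lia.
Qed.

Lemma grover_outward_vec_end : U *m outward_vec n = inward_vec n.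
Proof.
by rewrite mulmxBr (grover_pendant_end adj_sym adj_s)
  ?(grover_pendant_end adj_sym adj_w).
Qed.

Lemma grover_inward_vec_hub : U *m inward_vec 1 = - outward_vec 1.
Proof.
rewrite /inward_vec /outward_vec /= -s0_w0 grover_arc_vecB_same_head //.
  by rewrite adj_s ?eqxx //; lia.
by rewrite s0_w0 adj_w ?eqxx //; lia.
Qed.

Lemma grover_inward_vec_antiperiod : U ^+ (2 * n) *m inward_vec n = - inward_vec n.
Proof.
have [back_n1 n_1] : (n - (n - 1) = 1)%N /\ (1 + (n - 1) = n)%N by lia.
have -> : (2 * n = 1 + (n - 1) + 1 + (n - 1))%N by lia.
rewrite !exprD expr1 -!mulmxE -!mulmxA grover_inward_vec_iter ?back_n1; last lia.
rewrite grover_inward_vec_hub !mulmxN grover_outward_vec_iter ?n_1 //.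
by rewrite grover_outward_vec_end.
Qed.

Lemma inward_vec_neq0 : inward_vec n != 0.
Proof.
have sn_adj : adj (s n) (s n.-1) by rewrite adj_s ?eqxx //; lia.
apply/negP => /eqP/matrixP/(_ (enum_rank (exist _ (s n, s n.-1) sn_adj)) 0).
by rewrite !mxE enum_rankK /= eqxx xpair_eqE (negbTE sn_neq_wn) subr0.
Qed.

Lemma twin_pendant_paths_not_odd_periodic : ~ odd_periodic adj.
Proof. exact: grover_not_odd_periodic inward_vec_neq0 grover_inward_vec_antiperiod. Qed.

End TwinPendantPaths.

Local Close Scope ring_scope.

(* [spos k] and [wpos k r] are convertible to [arm_pos (k - 1)] and
   [arm_pos (k - 1 + (r - 1))]; this is what makes [cycle_paths_adjE] hold by [by []]. *)
Definition arm_pos (o i : nat) : nat := if i == 0 then 0 else o + i.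

Definition cycle_edge (k p q : nat) : bool :=
  [exists i : 'I_k.+1, (0 < i) && nat_edge p q (vpos k i.-1) (vpos k i)].

Definition arm_edge (r o p q : nat) : bool :=
  [exists i : 'I_r, (0 < i) && nat_edge p q (arm_pos o i.-1) (arm_pos o i)].

Lemma cycle_paths_adjE k r p q :
  cycle_paths_adj k r p q =
  [|| cycle_edge k p q, arm_edge r (k - 1) p q | arm_edge r (k - 1 + (r - 1)) p q].
Proof. by []. Qed.

Lemma nat_edgeC p q a b : nat_edge p q a b = nat_edge q p a b.
Proof. by rewrite /nat_edge orbC; congr (_ || _); rewrite andbC. Qed.

Lemma cycle_paths_adj_sym k r : symmetric (cycle_paths_adj k r).
Proof.
by move=> p q; congr [|| _, _ | _]; apply: eq_existsb => i; rewrite nat_edgeC.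
Qed.

Ltac nat_edge_arith :=
  rewrite /nat_edge /vpos /arm_pos /=; repeat (case: ifP => ?); lia.

Lemma cycle_edge_far k p q : k <= p -> cycle_edge k p q = false.
Proof. by move=> k_le_p; apply/existsP => -[[i i_lt] /= /andP[i_gt0]]; nat_edge_arith. Qed.

Lemma arm_edge_far r o p q : 0 < p -> ~~ (o < p <= o + (r - 1)) ->
  arm_edge r o p q = false.
Proof.
by move=> p_gt0 p_out; apply/existsP => -[[i i_lt] /= /andP[i_gt0]]; nat_edge_arith.
Qed.

Lemma arm_edgeE r o i q : 0 < i <= r - 1 ->
  arm_edge r o (o + i) q = (q == arm_pos o i.-1) || (i < r - 1) && (q == arm_pos o i.+1).
Proof.
move=> i_range; apply/existsP/idP => [[[j j_lt] /= /andP[j_gt0]]|]; first by nat_edge_arith.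
case/orP => [q_pred | /andP[i_lt q_succ]].
  have i_lt_r : i < r by lia.
  by exists (Ordinal i_lt_r) => /=; move: q_pred; nat_edge_arith.
have i1_lt_r : i.+1 < r by lia.
by exists (Ordinal i1_lt_r) => /=; move: q_succ; nat_edge_arith.
Qed.

Section Arms.
(* [x0] only serves as the default of [insubd]: every arm position used is in range. *)
Variables (k r : nat) (x0 : 'I_(k + 2 * (r - 1))).
Hypothesis k_gt0 : 0 < k.

Definition arm_offsets : seq nat := [:: k - 1; k - 1 + (r - 1)].

Definition arm_vertex (o i : nat) : 'I_(k + 2 * (r - 1)) := insubd x0 (arm_pos o i).

Lemma val_arm_vertex o i : o \in arm_offsets -> i <= r - 1 ->
  val (arm_vertex o i) = arm_pos o i.
Proof.
move=> arm_o i_le; rewrite val_insubd ifT //.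
by move: arm_o; rewrite !inE /arm_pos => /orP[] /eqP->; case: ifP; lia.
Qed.

Lemma arm_vertex_inj o : o \in arm_offsets ->
  {in [pred i | i <= r - 1] &, injective (arm_vertex o)}.
Proof.
move=> arm_o i j i_le j_le /(congr1 val).
by rewrite !val_arm_vertex // /arm_pos; case: ifP; case: ifP; lia.
Qed.

Lemma adj_arm_vertex o i y : o \in arm_offsets -> 0 < i <= r - 1 ->
  cycle_paths_adj k r (arm_vertex o i) y =
  (y == arm_vertex o i.-1) || (i < r - 1) && (y == arm_vertex o i.+1).
Proof.
move=> arm_o i_range; have /andP[i_gt0 i_le] := i_range.
have val_i : val (arm_vertex o i) = o + i.
  by rewrite val_arm_vertex // /arm_pos eqn0Ngt i_gt0.
have arm_i : arm_edge r o (o + i) (val y) =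
    (y == arm_vertex o i.-1) || (i < r - 1) && (y == arm_vertex o i.+1).
  rewrite arm_edgeE // -val_eqE val_arm_vertex //; last lia.
  by case: ltnP => //= i_lt; rewrite -val_eqE val_arm_vertex.
have o_ge : k - 1 <= o by move: arm_o; rewrite !inE => /orP[]/eqP->; lia.
rewrite cycle_paths_adjE val_i cycle_edge_far /=; last lia.
move: arm_o arm_i; rewrite !inE => /orP[]/eqP o_eq; rewrite -o_eq => ->.
  by rewrite arm_edge_far ?orbF //; lia.
by rewrite arm_edge_far //; lia.
Qed.

End Arms.

Theorem theorem3p1 (k r : nat) :
  (3 <= k)%N -> odd k -> (2 <= r)%N ->
  ~ odd_periodic (cycle_paths_adj k r).
Proof.
move=> k_ge3 _ r_ge2.
have k_gt0 : 0 < k by lia.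
have x0 : 'I_(k + 2 * (r - 1)) by exists 0; lia.
have arm_s : k - 1 \in arm_offsets k r by rewrite mem_head.
have arm_w : k - 1 + (r - 1) \in arm_offsets k r by rewrite !inE eqxx orbT.
apply: (@twin_pendant_paths_not_odd_periodic _ _ (r - 1)
          (arm_vertex x0 (k - 1)) (arm_vertex x0 (k - 1 + (r - 1)))).
- exact: cycle_paths_adj_sym.
- lia.
- by apply: val_inj; rewrite !val_arm_vertex.
- by rewrite -val_eqE !val_arm_vertex // /arm_pos; case: ifP; lia.
- exact: arm_vertex_inj.
- exact: arm_vertex_inj.
- by move=> i y; apply: adj_arm_vertex.
- by move=> i y; apply: adj_arm_vertex.
Qed.
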